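(* Let $\phi_\infty$ be the $\mathcal{BC}c$-formula in the variables $r_0,r_1,r_2,r_3,r'_0,r'_1,r'_2,r'_3,t$ that is the conjunction of the following formulas, where all indices are taken modulo 4 and $[k]$ denotes $k \bmod 4$: (1) $r_0+r_1+r_2+r_3=1$, $r_i\cdot r_j=0$ for $0\le i<j\le 3$, $r_i\neq 0$ for $0\le i\le 3$, $\neg C(r_0,r_2)$ and $\neg C(r_1,r_3)$; (2) $r'_i\neq 0$ and $r'_i\le r_i$ for $0\le i\le 3$, and $t\neq 0$; (3) $c(r'_i+r_{[i+1]}+t)$ for $0\le i\le 3$; (4) $\neg C(r'_i,t)$ for $0\le i\le 3$; (5) $\neg C\bigl(r'_i,\ r_{[i+1]}\cdot(-r'_{[i+1]})\bigr)$ for $0\le i\le 3$. Then $\phi_\infty$ is satisfiable over ${\sf RC}(\mathbb{R}^n)$ for every $n\ge 2$. On the other hand, if $T$ is a locally connected, unicoherent topological space, then in any interpretation over $(T,{\sf RC}(T))$ satisfying $\phi_\infty$, at least one of the variables is assigned a set having infinitely many connected components.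
   Context: For a topological space $T$, ${\sf RC}(T)$ is the set of regular closed subsets of $T$ (sets equal to the closure of their interior); it is a Boolean algebra with $X+Y=X\cup Y$, $X\cdot Y=\overline{\mathrm{int}(X\cap Y)}$, $-X=\overline{T\setminus X}$, $0=\emptyset$, $1=T$, and order $\subseteq$. Terms are built from variables using $+,\cdot,-,0,1$. The language $\mathcal{BC}c$ has atomic formulas $\tau_1=\tau_2$, $C(\tau_1,\tau_2)$ and $c(\tau)$, closed under $\wedge,\vee,\neg$; $\tau\neq 0$ abbreviates $\neg(\tau=0)$ and $\tau_1\le\tau_2$ abbreviates $\tau_1\cdot\tau_2=\tau_1$. An interpretation over $(T,{\sf RC}(T))$ assigns an element of ${\sf RC}(T)$ to each variable; terms are evaluated in the Boolean algebra; $\tau_1=\tau_2$ holds iff the values are equal, $C(\tau_1,\tau_2)$ holds iff the values have nonempty intersection, and $c(\tau)$ holds iff the value is connected (in the subspace topology). A formula is satisfiable over ${\sf RC}(\mathbb{R}^n)$ if some interpretation over $(\mathbb{R}^n,{\sf RC}(\mathbb{R}^n))$ makes it true. A space is locally connected if every neighbourhood of every point includes a connected neighbourhood of that point; $T$ is unicoherent if for any closed connected $X_1,X_2$ with $T=X_1\cup X_2$, the set $X_1\cap X_2$ is connected. *)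

From HB Require Import structures.
From mathcomp Require Import all_boot all_order all_algebra.
From mathcomp Require Import all_classical all_reals all_analysis.
Set Implicit Arguments. Unset Strict Implicit. Unset Printing Implicit Defensive.
Import Order.TTheory GRing.Theory Num.Theory.
Local Open Scope classical_set_scope.

Section RC.
Variable T : topologicalType.
Implicit Types X Y : set T.

Definition regular_closed X := closure (interior X) = X.

Definition rc_add X Y : set T := X `|` Y.
Definition rc_mul X Y : set T := closure (interior (X `&` Y)).
Definition rc_compl X : set T := closure (~` X).
Definition rc_one : set T := setT.
Definition rc_zero : set T := set0.
Definition rc_le X Y := rc_mul X Y = X.
Definition contact X Y := X `&` Y !=set0.

Definition locally_connected :=
  forall (x : T) (U : set T), nbhs x U ->
    exists V : set T, [/\ nbhs x V, connected V & V `<=` U].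

Definition unicoherent :=
  forall X1 X2 : set T, closed X1 -> closed X2 -> connected X1 -> connected X2 ->
    X1 `|` X2 = setT -> connected (X1 `&` X2).

Definition components X : set (set T) :=
  [set connected_component X x | x in X].

Definition infinitely_many_components X := ~ finite_set (components X).

Definition succ4 (i : 'I_4) : 'I_4 := inord ((i.+1) %% 4).

Definition phi_inf (r r' : 'I_4 -> set T) (t : set T) : Prop :=
  (forall i, regular_closed (r i)) /\ (forall i, regular_closed (r' i)) /\
  regular_closed t /\
  rc_add (rc_add (rc_add (r (inord 0)) (r (inord 1))) (r (inord 2))) (r (inord 3))
    = rc_one /\
  (forall i j : 'I_4, (i < j)%N -> rc_mul (r i) (r j) = rc_zero) /\
  (forall i, r i <> rc_zero) /\
  ~ contact (r (inord 0)) (r (inord 2)) /\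
  ~ contact (r (inord 1)) (r (inord 3)) /\
  (forall i, r' i <> rc_zero /\ rc_le (r' i) (r i)) /\
  t <> rc_zero /\
  (forall i, connected (rc_add (rc_add (r' i) (r (succ4 i))) t)) /\
  (forall i, ~ contact (r' i) t) /\
  (forall i, ~ contact (r' i) (rc_mul (r (succ4 i)) (rc_compl (r' (succ4 i))))).

End RC.

(* The model lives in the first two coordinates: [r i] is the union of the
   vertical strips [4k+i, 4k+i+1] x R, [r' i] is the part of each strip below
   height [4k+i], and [t] is the half-plane above the line [y = x + 2]. Each
   [r' i] meets the next strip only inside [r' (i+1)], and that strip reaches
   [t].

   Conversely, assume every variable has finitely many components. By clauses
   (3)-(5) each component of [r' i] meets [r' (i+1)], which yields a walk
   x_0, x_1, ... whose j-th step stays in one component [w j] of [r (j mod 4)].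
   There are finitely many such pieces, so the walk first returns to a piece
   [w a] at some time b. Let B be the union of the pieces visited strictly in
   between and Y the union of all other pieces. Unicoherence applied to the
   component X1 of Y through x_a and to B together with the other components of
   Y makes X1 `&` B connected. But X1 `&` B lies in the union of the pairwise
   disjoint closed sets r_k `&` r_(k+1), and meets two of them: at x_(a+1) and
   at x_b. *)

From HB Require Import structures.
From mathcomp Require Import all_boot all_order all_algebra.
From mathcomp Require Import all_classical all_reals all_analysis.
From mathcomp Require Import lra zify.
Import numFieldNormedType.Exports.
Import Order.TTheory GRing.Theory Num.Theory.
Local Open Scope classical_set_scope.

Section regular_closed_sets.
Context {T : topologicalType}.
Implicit Types X Y : set T.

Lemma regular_closed_closed {X} : regular_closed X -> closed X.
Proof. by rewrite /regular_closed => <-; exact: closed_closure. Qed.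

Lemma rc_le_sub {X Y} : regular_closed Y -> rc_le X Y -> X `<=` Y.
Proof.
move=> /regular_closed_closed cY <- z mz; rewrite (closure_id Y).1 //.
by apply: closureS mz => u /interior_subset [].
Qed.

Lemma regular_closed_subU_mul_compl {X Y} : regular_closed X -> regular_closed Y ->
  X `<=` Y `|` rc_mul X (rc_compl Y).
Proof.
move=> rcX rcY z Xz; have [|nYz] := pselect (Y z); first by left.
right => B Bz.
have oC : open (~` Y) by apply: closed_openC; exact: regular_closed_closed.
have BYz : nbhs z (B `&` ~` Y).
  by apply: filterI => //; apply: open_nbhs_nbhs; split.
have : closure (interior X) z by rewrite rcX.
move=> /(_ _ BYz) [w [iXw [Bw nYw]]]; exists w; split => //.
suff : interior X `&` ~` Y `<=` interior (X `&` closure (~` Y)) by apply.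
rewrite -open_subsetE; last by apply: openI => //; exact: open_interior.
by move=> u [/interior_subset Xu nYu]; split => //; exact: subset_closure.
Qed.

End regular_closed_sets.

Lemma dependent_choice_nat {A : Type} (P : nat -> A -> Prop)
    (Q : nat -> A -> A -> Prop) (a : A) :
  P 0%N a -> (forall n x, P n x -> exists y, Q n x y /\ P n.+1 y) ->
  exists x : nat -> A, forall n, P n (x n) /\ Q n (x n) (x n.+1).
Proof.
move=> Pa step.
have [f Hf] : {f : nat * A -> A & forall p, P p.1 p.2 ->
    Q p.1 p.2 (f p) /\ P p.1.+1 (f p)}.
  apply: (@choice _ _ (fun p y => P p.1 p.2 -> Q p.1 p.2 y /\ P p.1.+1 y)).
  move=> [n x]; have [Px|nPx] := pselect (P n x).
    by have [y hy] := step n x Px; exists y.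
  by exists x.
pose fix x n := if n is m.+1 then f (m, x m) else a.
have Px n : P n (x n) by elim: n => [|n IH] //=; exact: (Hf (n, x n) IH).2.
by exists x => n; split => //; exact: (Hf (n, x n) (Px n)).1.
Qed.

Lemma finite_range_first_repeat {A : Type} {S : set A} (f : nat -> A) :
  finite_set S -> (forall n, S (f n)) ->
  exists a b, [/\ (a < b)%N, f b = f a & forall j, (a < j < b)%N -> f j <> f a].
Proof.
move=> fS Sf.
have [m [n [mn fnm]]] : exists m n, (m < n)%N /\ f n = f m.
  apply: contrapT => norep; apply: infinite_nat.
  have -> : [set: nat] = f @^-1` S.
    by apply/seteqP; split => // k _; rewrite /preimage /=; exact: Sf.
  apply: finite_preimage fS => p q _ _ fpq.
  case: (ltngtP p q) => // [pq|qp]; exfalso; apply: norep.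
  - by exists p, q.
  - by exists q, p.
have exQ : exists j, `[< (m < j)%N /\ f j = f m >] by exists n; exact/asboolP.
case: (ex_minnP exQ) => b /asboolP [mb fb] bmin.
exists m, b; split => // j /andP [mj jb] fj.
by have := bmin j (asboolT (conj mj fj)); rewrite leqNgt jb.
Qed.

Section components.
Context {T : topologicalType}.
Implicit Types A B E X Y : set T.

Lemma connected_subU_closed {A B E} : connected A -> closed B -> closed E ->
  A `<=` B `|` E -> B `&` E = set0 -> A `&` B !=set0 -> A `<=` B.
Proof.
move=> cA cB cE AU BE AB0.
have AB : A `&` B = A.
  apply: cA => //; last by exists B.
  exists (~` E); first exact: closed_openC.
  apply/seteqP; split => z.
  - move=> [Az Bz]; split => // Ez.
    by have : (B `&` E) z by []; rewrite BE.
  - by move=> [Az nEz]; split => //; case: (AU _ Az).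
by rewrite -AB => z [].
Qed.

Lemma connected_componentS {A B} x :
  A `<=` B -> connected_component A x `<=` connected_component B x.
Proof. by move=> AB y [C [Cx CA cC] Cy]; exists C => //; split => // z /CA /AB. Qed.

Lemma connected_component_eq {X x y z} :
  connected_component X x z -> connected_component X y z ->
  connected_component X x = connected_component X y.
Proof. by move=> /same_connected_component -> /same_connected_component ->. Qed.

Lemma finite_components_bigcup {I : Type} {F : set I} {g : I -> set T} :
  finite_set F -> (forall i, F i -> connected (g i)) ->
  finite_set (components (\bigcup_(i in F) g i)).
Proof.
move=> fF cg; set Y := \bigcup_(i in F) g i.
pose piece i := \bigcup_(z in g i) connected_component Y z.
apply: (@sub_finite_set _ _ (piece @` F)); last exact: finite_image.
move=> _ [z [i Fi giz] <-]; exists i => //.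
have gi_sub : g i `<=` connected_component Y z.
  by apply: connected_component_max => //; [move=> u ?; exists i | exact: cg].
apply/seteqP; split => u.
- by move=> [v /gi_sub /same_connected_component ->].
- by move=> zu; exists z.
Qed.

Definition other_components X x : set T :=
  \bigcup_(C in components X `\` [set connected_component X x]) C.

Lemma other_components_closed {X} x : closed X -> finite_set (components X) ->
  closed (other_components X x).
Proof.
move=> cX fX; apply: closed_bigcup; first by apply: sub_finite_set fX => C [].
by move=> _ [[y _ <-] _]; exact: component_closed.
Qed.

Lemma subU_other_components {X} x :
  X `<=` connected_component X x `|` other_components X x.
Proof.
move=> z Xz; have [e|ne] := pselect (connected_component X z = connected_component X x).
  by left; rewrite -e; exact: connected_component_refl.
right; exists (connected_component X z); last exact: connected_component_refl.
by split => //; exists z.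
Qed.

Lemma component_other_componentsI X x :
  connected_component X x `&` other_components X x = set0.
Proof.
apply/seteqP; split => // z [xz [_ [[y _ <-] ne] yz]].
by apply: ne; exact: connected_component_eq yz xz.
Qed.

(* Since the space is connected, every component of [Y] meets [B]; hence
   [X2 := B `|` other_components Y y] is connected and unicoherence applies to
   [X1 := connected_component Y y] and [X2]. *)
Lemma unicoherent_componentI_connected {Y B} y : unicoherent T ->
  connected [set: T] -> closed Y -> closed B -> connected B -> B !=set0 ->
  finite_set (components Y) -> Y `|` B = setT ->
  connected (connected_component Y y `&` B).
Proof.
move=> uni cT cY cB conB [b0 Bb0] fY YB.
have cD u : closed (other_components Y u) by exact: other_components_closed.
have meetB u : Y u -> connected_component Y u `&` B !=set0.
  move=> Yu; apply: contrapT => /set0P/negP/negPn/eqP CB.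
  suff /(_ b0 I) : [set: T] `<=` connected_component Y u.
    by move=> Cb0; have : (connected_component Y u `&` B) b0 by []; rewrite CB.
  apply: (connected_subU_closed cT (component_closed (x := u) cY)
    (closedU (cD u) cB)).
  - move=> z _; have : (Y `|` B) z by rewrite YB.
    by case=> [/(subU_other_components u) [?|?]|?];
      [left|right; left|right; right].
  - by rewrite setIUr component_other_componentsI CB setU0.
  - by exists u; split => //; exact: connected_component_refl.
set X1 := connected_component Y y; set D := other_components Y y.
have X2_conn : connected (B `|` D).
  have -> : B `|` D = \bigcup_(C in [set C | C = set0 \/
      (components Y `\` [set X1]) C]) (B `|` C).
    apply/seteqP; split => z.
    - by case=> [Bz|[C DC Cz]]; [exists set0; [left|left] | exists C; [right|right]].
    - by move=> [C [->|DC] [Bz|Cz]] //; [left|left|right; exists C].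
  apply: bigcup_connected; first by exists b0 => C _; left.
  move=> C [->|[[u Yu <-] _]]; first by rewrite setU0.
  by apply: connectedU => //; [rewrite setIC; exact: meetB | exact: component_connected].
have X12 : X1 `|` (B `|` D) = setT.
  apply/seteqP; split => // z _; have : (Y `|` B) z by rewrite YB.
  by case=> [/(subU_other_components y) [?|?]|?];
    [left|right; right|right; left].
have := uni _ _ (component_closed (x := y) cY) (closedU cB (cD y))
  (@component_connected _ Y y) X2_conn X12.
by rewrite setIUr [X1 `&` D]component_other_componentsI setU0.
Qed.

End components.

Section joined.
Context {T : topologicalType}.
Implicit Types U L : set T.

Definition joined U (a b : T) := exists L, [/\ connected L, L `<=` U, L a & L b].

Lemma joined_trans U a b c : joined U a b -> joined U b c -> joined U a c.
Proof.
move=> [L [cL LU La Lb]] [L' [cL' L'U L'b L'c]]; exists (L `|` L'); split.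
- by apply: connectedU => //; exists b.
- by move=> z [/LU|/L'U].
- by left.
- by right.
Qed.

Lemma connected_joined U a : (forall b, U b -> joined U a b) -> connected U.
Proof.
move=> Ua.
have -> : U = \bigcup_(L in [set L | [/\ connected L, L `<=` U & L a]]) L.
  apply/seteqP; split => [b Ub|b [L [_ LU _] Lb]]; last exact: LU.
  by have [L [cL LU La Lb]] := Ua b Ub; exists L.
by apply: bigcup_connected => [|L [] //]; exists a => L [].
Qed.

End joined.

Lemma bigcup_chain_connected {T : topologicalType} (A : nat -> set T) m n :
  (forall j, connected (A j)) -> (forall j, A j `&` A j.+1 !=set0) ->
  connected (\bigcup_(j in [set j | (m <= j <= m + n)%N]) A j).
Proof.
move=> cA AA; elim: n => [|n IH].
  have -> : \bigcup_(j in [set j | (m <= j <= m + 0)%N]) A j = A m.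
    apply/seteqP; split => [z [j /= jm Ajz]|z Amz]; last by exists m => //=; lia.
    by rewrite (_ : m = j) //; lia.
  exact: cA.
have -> : \bigcup_(j in [set j | (m <= j <= m + n.+1)%N]) A j =
    \bigcup_(j in [set j | (m <= j <= m + n)%N]) A j `|` A (m + n).+1.
  apply/seteqP; split => z.
  - move=> [j /= jmn Ajz]; have [ej|ne] := eqVneq j (m + n).+1.
      by right; rewrite -ej.
    by left; exists j => //=; lia.
  - case=> [[j /= jmn Ajz]|Az]; first by exists j => //=; lia.
    by exists (m + n).+1 => //=; lia.
apply: connectedU => //; have [z [z1 z2]] := AA (m + n)%N.
by exists z; split => //; exists (m + n)%N => //=; lia.
Qed.

Lemma val_succ4 (i : 'I_4) : (succ4 i : nat) = i.+1 %% 4.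
Proof. by rewrite /succ4 inordK // ltn_pmod. Qed.

Lemma succ4_cases (k k' : 'I_4) :
  [|| k' == k, k' == succ4 k, k' == succ4 (succ4 k) | k' == succ4 (succ4 (succ4 k))].
Proof. by rewrite -!val_eqE /= !val_succ4; have := ltn_ord k; have := ltn_ord k'; lia. Qed.

Lemma succ4K4 (k : 'I_4) : succ4 (succ4 (succ4 (succ4 k))) = k.
Proof. by apply: val_inj; rewrite /= !val_succ4; have := ltn_ord k; lia. Qed.

Lemma succ4_neq (k : 'I_4) : succ4 k != k.
Proof. by rewrite -val_eqE /= val_succ4; have := ltn_ord k; lia. Qed.

Lemma succ4_inZp j : succ4 (inZp j) = inZp j.+1 :> 'I_4.
Proof. by apply: val_inj; rewrite /= val_succ4 /=; lia. Qed.

Lemma succ4_succ4_inord k : (k < 4)%N ->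
  succ4 (succ4 (inord k)) = inord ((k + 2) %% 4) :> 'I_4.
Proof. by move=> k4; apply: val_inj; rewrite /= !val_succ4 !inordK ?ltn_pmod //; lia. Qed.

Section cyclic_regions.
Context {T : topologicalType} (r : 'I_4 -> set T).
Hypotheses (r02 : ~ contact (r (inord 0)) (r (inord 2)))
  (r13 : ~ contact (r (inord 1)) (r (inord 3))).

Lemma not_contact_opposite i : ~ contact (r i) (r (succ4 (succ4 i))).
Proof.
rewrite -[i]inord_val succ4_succ4_inord //.
case: i => -[|[|[|[|//]]]] _ //= [z [z1 z2]].
- by apply: r02; exists z; split; [exact: z2 | exact: z1].
- by apply: r13; exists z; split; [exact: z2 | exact: z1].
Qed.

Lemma meet_adjacent i i' z : i != i' -> r i z -> r i' z ->
  exists k, r k z /\ r (succ4 k) z.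
Proof.
move=> ii' riz ri'z.
case/or4P: (succ4_cases i i') => /eqP ei'; rewrite ei' in ri'z ii'.
- by rewrite eqxx in ii'.
- by exists i.
- by exfalso; apply: (@not_contact_opposite i); exists z.
- by exists (succ4 (succ4 (succ4 i))); rewrite succ4K4.
Qed.

Lemma adjacent_pairsI k k' z : k != k' -> r k z -> r (succ4 k) z ->
  r k' z -> r (succ4 k') z -> False.
Proof.
move=> kk' rkz rskz rk'z rsk'z.
case/or4P: (succ4_cases k k') => /eqP ek'; rewrite ek' in rk'z rsk'z kk'.
- by rewrite eqxx in kk'.
- by apply: (@not_contact_opposite k); exists z.
- by apply: (@not_contact_opposite k); exists z.
- by apply: (@not_contact_opposite (succ4 k)); exists z; rewrite succ4K4 in rsk'z.
Qed.

Lemma connected_sub_adjacent_pair S k : (forall i, closed (r i)) -> connected S ->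
  (forall z, S z -> exists k, r k z /\ r (succ4 k) z) ->
  S `&` (r k `&` r (succ4 k)) !=set0 -> S `<=` r k `&` r (succ4 k).
Proof.
move=> r_closed cS S_adj Sk.
apply: (connected_subU_closed (E := \bigcup_(k' in [set k' | k' != k]) (r k' `&` r (succ4 k')))
  cS (closedI (r_closed _) (r_closed _))) => //.
- apply: closed_bigcup => [|k' _]; first exact: finite_finset.
  exact: closedI (r_closed _) (r_closed _).
- move=> z /S_adj [k' [rk'z rsk'z]].
  by have [<-|k'k] := eqVneq k' k; [left | right; exists k'].
- apply/seteqP; split => // z [[rkz rskz] [k' k'k [rk'z rsk'z]]].
  exact: adjacent_pairsI k' k z k'k rk'z rsk'z rkz rskz.
Qed.

End cyclic_regions.

Section finitely_many_components.
Variables (T : topologicalType) (r r' : 'I_4 -> set T) (t : set T).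
Hypotheses (r_rc : forall i, regular_closed (r i))
  (r'_rc : forall i, regular_closed (r' i)) (t_rc : regular_closed t)
  (r_cover : rc_add (rc_add (rc_add (r (inord 0)) (r (inord 1))) (r (inord 2)))
    (r (inord 3)) = @rc_one T)
  (r02 : ~ contact (r (inord 0)) (r (inord 2)))
  (r13 : ~ contact (r (inord 1)) (r (inord 3)))
  (r'0 : r' (inord 0) <> @rc_zero T)
  (r'_le : forall i, rc_le (r' i) (r i))
  (t0 : t <> @rc_zero T)
  (r'rt_conn : forall i, connected (rc_add (rc_add (r' i) (r (succ4 i))) t))
  (r't : forall i, ~ contact (r' i) t)
  (r'_next : forall i, ~ contact (r' i) (rc_mul (r (succ4 i)) (rc_compl (r' (succ4 i)))))
  (uni : unicoherent T)
  (r_fin : forall i, finite_set (components (r i)))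
  (r'_fin : forall i, finite_set (components (r' i))).

Let r_closed i : closed (r i) := regular_closed_closed (r_rc i).
Let r'_closed i : closed (r' i) := regular_closed_closed (r'_rc i).
Let r'_sub i : r' i `<=` r i := rc_le_sub (r_rc i) (r'_le i).

Lemma regions_cover z : exists i, r i z.
Proof.
have : @rc_one T z by [].
by rewrite -r_cover => -[[[?|?]|?]|?]; eexists; eassumption.
Qed.

Lemma space_connected : connected [set: T].
Proof.
have [z tz] : t !=set0 by apply/set0P/eqP.
have -> : [set: T] = \bigcup_(i in [set: 'I_4]) rc_add (rc_add (r' i) (r (succ4 i))) t.
  apply/seteqP; split => // y _; have [k rky] := regions_cover y.
  by exists (succ4 (succ4 (succ4 k))) => //; left; right; rewrite succ4K4.
by apply: bigcup_connected => [|i _]; [exists z => i _; right | exact: r'rt_conn].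
Qed.

(* If the component [C] meets [r (succ4 i)], clause (5) puts the meeting point
   in [r' (succ4 i)]; otherwise [C] would be a closed piece split off from the
   connected set of clause (3), which contains [t], and [t] misses [C]. *)
Lemma component_meets_next i z : r' i z ->
  exists y, connected_component (r' i) z y /\ r' (succ4 i) y.
Proof.
move=> r'iz; set C := connected_component (r' i) z.
have Csub : C `<=` r' i by exact: connected_component_sub.
have [[y [Cy rsy]]|CrI] := pselect (C `&` r (succ4 i) !=set0).
  case: (regular_closed_subU_mul_compl (r_rc (succ4 i)) (r'_rc (succ4 i)) _ rsy).
    by exists y.
  by move=> ry; exfalso; apply: (r'_next i); exists y; split => //; exact: Csub.
exfalso; have [u tu] : t !=set0 by apply/set0P/eqP.
suff /(_ u (or_intror tu)) : rc_add (rc_add (r' i) (r (succ4 i))) t `<=` C.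
  by move=> /Csub r'iu; apply: (r't i); exists u.
apply: (connected_subU_closed (E := other_components (r' i) z `|` r (succ4 i) `|` t)
  (r'rt_conn i) (component_closed (x := z) (r'_closed i))).
- apply: closedU; last exact: regular_closed_closed t_rc.
  by apply: closedU; [exact: other_components_closed | exact: r_closed].
- move=> v [[/(subU_other_components z) [?|?]|?]|?].
  + by left.
  + by right; left; left.
  + by right; left; right.
  + by right; right.
- apply/seteqP; split => // v [Cv [[Dv|rv]|tv]].
  + by have : (C `&` other_components (r' i) z) v by []; rewrite component_other_componentsI.
  + by apply: CrI; exists v.
  + by apply: (r't i); exists v; split => //; exact: Csub.
- by exists z; split; [left; left | exact: connected_component_refl].
Qed.

Lemma r'_walk : exists x : nat -> T, forall j,
  r' (inZp j) (x j) /\ connected_component (r' (inZp j)) (x j) (x j.+1).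
Proof.
have [x0 r'x0] : r' (inord 0) !=set0 by apply/set0P/eqP.
apply: (dependent_choice_nat (fun j => r' (inZp j))
  (fun j => connected_component (r' (inZp j))) x0).
  by rewrite (_ : inZp 0 = inord 0) //; apply: val_inj; rewrite /= inordK.
by move=> j z /component_meets_next; rewrite succ4_inZp.
Qed.

Section closed_walk.
Variable x : nat -> T.
Hypotheses (x_in : forall j, r (inZp j) (x j))
  (x_step : forall j, connected_component (r (inZp j)) (x j) (x j.+1)).

Let w j := connected_component (r (inZp j)) (x j).
Let pieces : set ('I_4 * set T) := [set p | components (r p.1) p.2].

Lemma pieces_finite : finite_set pieces.
Proof.
apply: (@sub_finite_set _ _ ([set: 'I_4] `*`` (fun i => components (r i)))) => //.
by apply: finite_setXR; [exact: finite_finset | move=> i _; exact: r_fin].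
Qed.

Lemma walk_pieces j : pieces (inZp j, w j).
Proof. by exists (x j); first exact: x_in. Qed.

Section first_return.
Variables a b : nat.
Hypotheses (ab : (a < b)%N) (wb : (inZp b : 'I_4, w b) = (inZp a, w a))
  (first_return : forall j, (a < j < b)%N -> (inZp j : 'I_4, w j) <> (inZp a, w a)).

Let inner := [set (inZp j : 'I_4, w j) | j in [set j | (a < j < b)%N]].
Let B := \bigcup_(j in [set j | (a < j < b)%N]) w j.
Let Y := \bigcup_(p in pieces `\` inner) p.2.

Lemma first_return_gap : (a.+1 < b)%N.
Proof.
rewrite ltn_neqAle ab andbT; apply/eqP => eb; move: wb => [].
by rewrite -eb => h _; lia.
Qed.

Lemma inner_connected : connected B.
Proof.
have -> : B = \bigcup_(j in [set j | (a.+1 <= j <= a.+1 + (b - a - 2))%N]) w j.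
  have := first_return_gap.
  by move=> gap; apply/seteqP; split => z [j /= jab wjz]; exists j => //=; lia.
apply: bigcup_chain_connected => j; first exact: component_connected.
by exists (x j.+1); split; [exact: x_step | exact: connected_component_refl].
Qed.

Lemma inner_closed : closed B.
Proof.
apply: closed_bigcup => [|j _]; first by apply: (@sub_finite_set _ _ `I_b) => // j /andP [].
exact/component_closed/r_closed.
Qed.

Lemma outer_closed : closed Y.
Proof.
apply: closed_bigcup => [|p [[y _ <-] _]]; first exact: sub_finite_set pieces_finite.
exact/component_closed/r_closed.
Qed.

Lemma outer_finite_components : finite_set (components Y).
Proof.
apply: finite_components_bigcup; first exact: sub_finite_set pieces_finite.
by move=> p [[y _ <-] _]; exact: component_connected.
Qed.

Lemma outerU_inner : Y `|` B = setT.
Proof.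
apply/seteqP; split => // z _; have [i riz] := regions_cover z.
have [[j jab [ij wjz]]|ninner] := pselect (inner (i, connected_component (r i) z)).
  by right; exists j => //; rewrite wjz; exact: connected_component_refl.
left; exists (i, connected_component (r i) z); last exact: connected_component_refl.
by split => //; exists z.
Qed.

Lemma start_sub_outer : w a `<=` Y.
Proof.
move=> z waz; exists (inZp a, w a) => //; split; first exact: walk_pieces.
by move=> [j jab eq]; exact: first_return jab eq.
Qed.

(* Two pieces of the same colour that meet coincide, and the pieces of [Y]
   are not those of [B]. *)
Lemma outerI_inner_adjacent z : Y z -> B z -> exists k, r k z /\ r (succ4 k) z.
Proof.
move=> [[i C] [[y /= riy eC] ninner] Cz] [j jab wjz]; subst C.
apply: (meet_adjacent r r02 r13 i (inZp j) z).
- apply/eqP => ij; apply: ninner; exists j => //; rewrite ij in Cz *.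
  by congr pair; exact: connected_component_eq wjz Cz.
- exact: connected_component_sub Cz.
- exact: connected_component_sub wjz.
Qed.

Lemma first_return_false : False.
Proof.
have gap := first_return_gap.
have kb : (inZp b : 'I_4) = inZp a := congr1 fst wb.
have wba : w b = w a := congr1 snd wb.
set X1 := connected_component Y (x a).
have [bx Bbx] : B !=set0.
  by exists (x a.+1); exists a.+1; [rewrite /=; lia | exact/connected_component_refl/x_in].
have conn := unicoherent_componentI_connected (x a) uni space_connected outer_closed
  inner_closed inner_connected (ex_intro _ bx Bbx) outer_finite_components outerU_inner.
have wa_X1 : w a `<=` X1.
  apply: connected_component_max.
  - exact/connected_component_refl/x_in.
  - exact: start_sub_outer.
  - exact: component_connected.
have /(_ (x b)) : X1 `&` B `<=` r (inZp a) `&` r (succ4 (inZp a)).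
  apply: (connected_sub_adjacent_pair r r02 r13 _ (inZp a) r_closed conn).
    by move=> z [/connected_component_sub Yz Bz]; exact: outerI_inner_adjacent z Yz Bz.
  exists (x a.+1); split; split.
  - exact/wa_X1/x_step.
  - by exists a.+1; [rewrite /=; lia | exact/connected_component_refl/x_in].
  - exact: connected_component_sub (x_step a).
  - by rewrite succ4_inZp; exact: x_in.
have bpred : b = b.-1.+1 by rewrite prednK //; lia.
have xb_X1 : X1 (x b).
  by apply: wa_X1; rewrite -wba; exact/connected_component_refl/x_in.
have xb_B : B (x b) by exists b.-1; [rewrite /=; lia | rewrite {2}bpred; exact: x_step].
move=> /(_ (conj xb_X1 xb_B)) [rxb rsxb].
apply: (adjacent_pairsI r r02 r13 (inZp b.-1) (inZp a) (x b) _ _ _ rxb rsxb).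
- by rewrite -kb {2}bpred -succ4_inZp eq_sym succ4_neq.
- by have := x_step b.-1; rewrite -bpred; exact: connected_component_sub.
- by rewrite succ4_inZp -bpred; exact: x_in.
Qed.

End first_return.

Lemma closed_walk_false : False.
Proof.
have [a [b [ab wb first]]] := finite_range_first_repeat
  (fun j => (inZp j : 'I_4, w j)) pieces_finite walk_pieces.
exact: (first_return_false a b ab wb first).
Qed.

End closed_walk.

Lemma finitely_many_components_false : False.
Proof.
have [x walk] := r'_walk.
apply: (closed_walk_false x) => j; first exact/r'_sub/(walk j).1.
exact: connected_componentS (r'_sub _) _ (walk j).2.
Qed.

End finitely_many_components.

Lemma phi_inf_infinitely_many_components (T : topologicalType) :
  unicoherent T -> forall (r r' : 'I_4 -> set T) (t : set T), phi_inf r r' t ->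
  (exists i, infinitely_many_components (r i)) \/
  (exists i, infinitely_many_components (r' i)) \/ infinitely_many_components t.
Proof.
move=> uni r r' t
  [r_rc [r'_rc [t_rc [r_cover [_ [_ [r02 [r13 [r'_le [t0 [conn [r't r'_next]]]]]]]]]]]].
apply: contrapT => fin.
have r_fin i : finite_set (components (r i)).
  by apply: contrapT => infi; apply: fin; left; exists i.
have r'_fin i : finite_set (components (r' i)).
  by apply: contrapT => infi; apply: fin; right; left; exists i.
exact: (@finitely_many_components_false T r r' t r_rc r'_rc t_rc r_cover r02 r13
  (r'_le (inord 0)).1 (fun i => (r'_le i).2) t0 conn r't r'_next uni r_fin r'_fin).
Qed.

Section plane.
Context {R : realType}.
Local Open Scope ring_scope.
Implicit Types (c k : int) (x y e : R) (P Q : R -> R -> Prop).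

Definition strip_start c k : R := (4 * k + c)%:~R.

Definition in_strip c x := exists k, strip_start c k <= x <= strip_start c k + 1.
Definition in_strip_open c x := exists k, strip_start c k < x < strip_start c k + 1.
Definition lower_strip c x y :=
  exists k, strip_start c k <= x <= strip_start c k + 1 /\ y <= strip_start c k.
Definition lower_strip_open c x y :=
  exists k, strip_start c k < x < strip_start c k + 1 /\ y < strip_start c k.
Definition upper_strip c x y :=
  exists k, strip_start c k <= x <= strip_start c k + 1 /\ strip_start c k <= y.
Definition above_diag x y := x + 2 <= y.
Definition above_diag_open x y := x + 2 < y.

Definition closure2 P x y :=
  forall e, 0 < e -> exists x' y', [/\ `|x - x'| < e, `|y - y'| < e & P x' y'].
Definition interior2 P x y :=
  exists2 e, 0 < e & forall x' y', `|x - x'| < e -> `|y - y'| < e -> P x' y'.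

Lemma strip_start_lt c k c' k' (d : int) :
  strip_start c k < strip_start c' k' + d%:~R -> (4 * k + c < 4 * k' + c' + d)%R.
Proof. by rewrite /strip_start -intrD ltr_int. Qed.

Lemma strip_start_le c k c' k' (d : int) :
  strip_start c k <= strip_start c' k' + d%:~R -> (4 * k + c <= 4 * k' + c' + d)%R.
Proof. by rewrite /strip_start -intrD ler_int. Qed.

Lemma strip_startD4 c k : strip_start (c + 4) k = strip_start c (k + 1).
Proof. by rewrite /strip_start; congr intmul; lia. Qed.

Lemma exists_pos_le3 (a b d : R) : 0 < a -> 0 < b -> 0 < d ->
  exists2 e, 0 < e & [/\ e <= a, e <= b & e <= d].
Proof.
move=> a0 b0 d0; exists (Num.min a (Num.min b d)); first by rewrite !lt_min a0 b0 d0.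
by split; rewrite !ge_min ?lexx ?orbT.
Qed.

Lemma in_strip_same_index {c k k' x x'} :
  strip_start c k <= x <= strip_start c k + 1 ->
  strip_start c k' <= x' <= strip_start c k' + 1 -> `|x - x'| < 2 -> k = k'.
Proof.
move=> /andP [h1 h2] /andP [h3 h4] /[!ltr_distlC] /andP [h5 h6].
have /strip_start_lt a1 : strip_start c k < strip_start c k' + 3%:~R by lra.
have /strip_start_lt a2 : strip_start c k' < strip_start c k + 3%:~R by lra.
by clear -a1 a2; lia.
Qed.

Lemma in_strip_cover x : [\/ in_strip 0 x, in_strip 1 x, in_strip 2 x | in_strip 3 x].
Proof.
have /andP [f1 f2] := floor_itv x; set m := Num.floor x in f1 f2.
pose k := (m %/ 4)%Z; pose c := (m %% 4)%Z.
have xc : in_strip c x.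
  exists k; rewrite /strip_start (_ : 4 * k + c = m); last by rewrite /k /c; lia.
  by apply/andP; split => //; rewrite intrD in f2; lra.
have : c = 0 \/ c = 1 \/ c = 2 \/ c = 3 by rewrite /c; lia.
by case=> [|[|[|]]] ec; rewrite ec in xc; [apply: Or41 | apply: Or42 | apply: Or43 | apply: Or44].
Qed.

Lemma in_strip_opposite c x : in_strip c x -> in_strip (c + 2) x -> False.
Proof.
move=> [k /andP [h1 h2]] [k' /andP [h3 h4]].
have /strip_start_le a1 : strip_start (c + 2) k' <= strip_start c k + 1%:~R by lra.
have /strip_start_le a2 : strip_start c k <= strip_start (c + 2) k' + 1%:~R by lra.
by clear -a1 a2; lia.
Qed.

Lemma in_stripD4 c x : in_strip (c + 4) x <-> in_strip c x.
Proof.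
split => [[k hk]|[k hk]]; first by exists (k + 1); rewrite -strip_startD4.
by exists (k - 1); rewrite strip_startD4 subrK.
Qed.

Lemma lower_stripD4 c x y : lower_strip (c + 4) x y <-> lower_strip c x y.
Proof.
split => [[k hk]|[k hk]]; first by exists (k + 1); rewrite -strip_startD4.
by exists (k - 1); rewrite strip_startD4 subrK.
Qed.

Lemma lower_strip_in_strip {c x y} : lower_strip c x y -> in_strip c x.
Proof. by move=> [k [xk _]]; exists k. Qed.

Lemma lower_upper_stripI c x y : lower_strip c x y -> upper_strip (c + 1) x y -> False.
Proof.
move=> [k [/andP [h1 h2] h3]] [k' [/andP [h4 h5] h6]].
have /strip_start_le a1 : strip_start (c + 1) k' <= strip_start c k + 0%:~R by lra.
have /strip_start_le a2 : strip_start c k <= strip_start (c + 1) k' + 1%:~R by lra.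
by clear -a1 a2; lia.
Qed.

Lemma closure2S {P Q x y} : (forall x y, P x y -> Q x y) -> closure2 P x y -> closure2 Q x y.
Proof.
move=> PQ clP e e0; have [x' [y' [xx' yy' Pxy']]] := clP e e0.
by exists x', y'; split => //; exact: PQ.
Qed.

Lemma interior2_sub {P x y} : interior2 P x y -> P x y.
Proof. by move=> [e e0]; apply; rewrite subrr normr0. Qed.

Lemma closure2_interior2 P Q :
  (forall x y, closure2 P x y -> P x y) ->
  (forall x y, Q x y -> interior2 P x y) ->
  (forall x y, P x y -> closure2 Q x y) ->
  forall x y, closure2 (interior2 P) x y <-> P x y.
Proof.
move=> clP QP PQ x y; split => [|Pxy]; last exact: closure2S QP (PQ _ _ Pxy).
by move=> /(closure2S (@interior2_sub P)); exact: clP.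
Qed.

Lemma closure2_in_strip {c x y} : closure2 (fun x _ => in_strip c x) x y -> in_strip c x.
Proof.
move=> clS; have /andP [f1 f2] := floor_itv (x - c%:~R); set m := Num.floor _ in f1 f2.
pose k := (m %/ 4)%Z.
have e1 : ((4 * k)%:~R : R) <= m%:~R by rewrite ler_int /k; clear; lia.
have e2 : ((m + 1)%:~R : R) <= (4 * k + 4)%:~R by rewrite ler_int /k; clear; lia.
rewrite !intrD in e2 f2.
have lo : strip_start c k <= x by rewrite /strip_start intrD; lra.
have hi : x < strip_start c k + 4 by rewrite /strip_start intrD; lra.
have [xk|xk] := lerP x (strip_start c k + 1); first by exists k; apply/andP.
have [e e0 [ex1 ex2 _]] := exists_pos_le3 (x - strip_start c k - 1) (strip_start c k + 4 - x)
  1 ltac:(lra) ltac:(lra) ltac:(lra).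
have [x' [_ [xx' _ [k' /andP [h3 h4]]]]] := clS e e0.
move: xx'; rewrite ltr_distlC => /andP [h5 h6].
have /strip_start_lt a1 : strip_start c k' < strip_start c k + 4%:~R by lra.
have /strip_start_lt a2 : strip_start c k < strip_start c k' + 0%:~R by lra.
by clear -a1 a2; lia.
Qed.

Lemma interior2_in_strip c x y : in_strip_open c x -> interior2 (fun x _ => in_strip c x) x y.
Proof.
move=> [k /andP [h1 h2]].
have [e e0 [e1 e2 _]] := exists_pos_le3 (x - strip_start c k) (strip_start c k + 1 - x) 1
  ltac:(lra) ltac:(lra) ltac:(lra).
exists e => // x' y' /[!ltr_distlC] /andP [h3 h4] _.
by exists k; apply/andP; split; lra.
Qed.

Lemma closure2_in_strip_open c x y : in_strip c x -> closure2 (fun x _ => in_strip_open c x) x y.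
Proof.
move=> [k /andP [h1 h2]] e e0.
have [d d0 [de d1 _]] := exists_pos_le3 (e / 2) (1 / 4) 1 ltac:(lra) ltac:(lra) ltac:(lra).
have [xk|xk] := lerP x (strip_start c k + 1 / 2).
- exists (x + d), y; rewrite subrr normr0 ltr_distlC; split => //; first (apply/andP; split; lra).
  by exists k; apply/andP; split; lra.
- exists (x - d), y; rewrite subrr normr0 ltr_distlC; split => //; first (apply/andP; split; lra).
  by exists k; apply/andP; split; lra.
Qed.

Lemma in_strip_regular c x y :
  closure2 (interior2 (fun x _ => in_strip c x)) x y <-> in_strip c x.
Proof.
apply: (closure2_interior2 _ (fun x _ => in_strip_open c x)) => x' y'.
- exact: closure2_in_strip.
- exact: interior2_in_strip.
- exact: closure2_in_strip_open.
Qed.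

Lemma closure2_lower_strip c x y : closure2 (lower_strip c) x y -> lower_strip c x y.
Proof.
move=> clL; have [k xk] := closure2_in_strip (closure2S (@lower_strip_in_strip c) clL).
exists k; split => //; have [//|yk] := lerP y (strip_start c k); exfalso.
have [e e0 [e1 e2 _]] := exists_pos_le3 (y - strip_start c k) 1 1 ltac:(lra) ltac:(lra) ltac:(lra).
have [x' [y' [xx' yy' [k' [xk' yk']]]]] := clL e e0.
have ek : k = k' by apply: in_strip_same_index xk xk' _; apply: lt_le_trans xx' _; lra.
by subst k'; move: yy'; rewrite ltr_distlC => /andP [h3 h4]; lra.
Qed.

Lemma interior2_lower_strip c x y : lower_strip_open c x y -> interior2 (lower_strip c) x y.
Proof.
move=> [k [/andP [h1 h2] h3]].
have [e e0 [e1 e2 e3]] := exists_pos_le3 (x - strip_start c k) (strip_start c k + 1 - x)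
  (strip_start c k - y) ltac:(lra) ltac:(lra) ltac:(lra).
exists e => // x' y' /[!ltr_distlC] /andP [h4 h5] /andP [h6 h7].
by exists k; split; [apply/andP; split|]; lra.
Qed.

Lemma closure2_lower_strip_open c x y : lower_strip c x y -> closure2 (lower_strip_open c) x y.
Proof.
move=> [k [/andP [h1 h2] h0]] e e0.
have [d d0 [de d1 _]] := exists_pos_le3 (e / 2) (1 / 4) 1 ltac:(lra) ltac:(lra) ltac:(lra).
have yd : `|y - (y - d)| < e by rewrite ltr_distlC; apply/andP; split; lra.
have [xk|xk] := lerP x (strip_start c k + 1 / 2).
- exists (x + d), (y - d); rewrite ltr_distlC; split => //; first (apply/andP; split; lra).
  by exists k; split; [apply/andP; split|]; lra.
- exists (x - d), (y - d); rewrite ltr_distlC; split => //; first (apply/andP; split; lra).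
  by exists k; split; [apply/andP; split|]; lra.
Qed.

Lemma lower_strip_regular c x y :
  closure2 (interior2 (lower_strip c)) x y <-> lower_strip c x y.
Proof.
apply: (closure2_interior2 _ (lower_strip_open c)) => x' y'.
- exact: closure2_lower_strip.
- exact: interior2_lower_strip.
- exact: closure2_lower_strip_open.
Qed.

Lemma above_diag_regular x y : closure2 (interior2 above_diag) x y <-> above_diag x y.
Proof.
apply: (closure2_interior2 _ above_diag_open) => {}x {}y; rewrite /above_diag.
- move=> clD; have [//|yx] := lerP (x + 2) y; exfalso.
  have [x' [y' []]] := clD ((x + 2 - y) / 2) ltac:(lra).
  by rewrite /above_diag !ltr_distlC => /andP [h1 h2] /andP [h3 h4]; lra.
- move=> yx; exists ((y - x - 2) / 2); first by rewrite /above_diag_open in yx; lra.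
  move=> x' y' /[!ltr_distlC] /andP [h1 h2] /andP [h3 h4].
  by rewrite /above_diag_open in yx; lra.
- move=> yx e e0; exists x, (y + e / 2); rewrite subrr normr0 ltr_distlC.
  by split => //; [apply/andP; split | rewrite /above_diag_open]; lra.
Qed.

Lemma closure2_upper_strip c x y : closure2 (upper_strip c) x y -> upper_strip c x y.
Proof.
move=> clU.
have upper_in_strip x' y' : upper_strip c x' y' -> in_strip c x' by move=> [k [xk _]]; exists k.
have [k xk] := closure2_in_strip (closure2S upper_in_strip clU).
exists k; split => //; have [//|yk] := lerP (strip_start c k) y; exfalso.
have [e e0 [e1 e2 _]] := exists_pos_le3 (strip_start c k - y) 1 1 ltac:(lra) ltac:(lra) ltac:(lra).
have [x' [y' [xx' yy' [k' [xk' yk']]]]] := clU e e0.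
have ek : k = k' by apply: in_strip_same_index xk xk' _; apply: lt_le_trans xx' _; lra.
by subst k'; move: yy'; rewrite ltr_distlC => /andP [h3 h4]; lra.
Qed.

(* Two distinct strips only share boundary lines, which have empty interior. *)
Lemma interior2_in_stripI c c' x y : (0 <= c <= 3)%R -> (0 <= c' <= 3)%R -> c != c' ->
  ~ interior2 (fun x _ => in_strip c x /\ in_strip c' x) x y.
Proof.
move=> hc hc' cc' [e e0 he].
have [d d0 [de d1 _]] := exists_pos_le3 (e / 2) 1 1 ltac:(lra) ltac:(lra) ltac:(lra).
have xx : `|x - x| < e by rewrite subrr normr0.
have yy : `|y - y| < e by rewrite subrr normr0.
have xd : `|x - (x + d)| < e by rewrite ltr_distlC; apply/andP; split; lra.
have xd2 : `|x - (x + d)| < 2 by rewrite ltr_distlC; apply/andP; split; lra.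
have [[k1 hk1] [k1' hk1']] := he x y xx yy.
have [[k2 hk2] [k2' hk2']] := he (x + d) y xd yy.
have ek := in_strip_same_index hk1 hk2 xd2; have ek' := in_strip_same_index hk1' hk2' xd2.
subst k2 k2'.
move: hk1 hk1' hk2 hk2' => /andP [h1 h2] /andP [h3 h4] /andP [h5 h6] /andP [h7 h8].
have /strip_start_lt a1 : strip_start c' k1' < strip_start c k1 + 1%:~R by lra.
have /strip_start_lt a2 : strip_start c k1 < strip_start c' k1' + 1%:~R by lra.
by move/eqP: cc'; clear -a1 a2 hc hc'; lia.
Qed.

(* Near [(x, y)] the strip index is constant, and points outside the lower
   strip lie above its start. *)
Lemma interior2_not_lower_upper c x y :
  interior2 (fun x y => in_strip c x /\ closure2 (fun x y => ~ lower_strip c x y) x y) x y ->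
  upper_strip c x y.
Proof.
move=> [e e0 he].
have [[k xk] clnL] := he x y (ltac:(by rewrite subrr normr0)) (ltac:(by rewrite subrr normr0)).
exists k; split => //; have [//|yk] := lerP (strip_start c k) y; exfalso.
have [d d0 [de d1 dk]] := exists_pos_le3 e 1 (strip_start c k - y) e0 ltac:(lra) ltac:(lra).
have [x' [y' [xx' yy' nL]]] := clnL d d0.
have [[k' xk'] _] := he x' y' (lt_le_trans xx' de) (lt_le_trans yy' de).
have ek : k = k' by apply: in_strip_same_index xk xk' _; apply: lt_le_trans xx' _; lra.
subst k'; apply: nL; exists k; split => //.
by move: yy'; rewrite ltr_distlC => /andP [h1 h2]; lra.
Qed.

End plane.

Section cylinders.
Context {R : realType} {m : nat}.
Local Open Scope ring_scope.
Local Notation V := 'rV[R]_m.+2.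
Implicit Types (p q : V) (P Q : R -> R -> Prop).

Definition xcoord p : R := p ord0 ord0.
Definition ycoord p : R := p ord0 (inord 1).
Definition cylinder P : set V := [set p | P (xcoord p) (ycoord p)].
Definition translate p (a b : R) : V :=
  p + a *: delta_mx ord0 ord0 + b *: delta_mx ord0 (inord 1).

Lemma nbhs_coordwiseP p (A : set V) : nbhs p A <->
  exists2 e : R, 0 < e & forall q, (forall i j, `|p i j - q i j| < e) -> A q.
Proof.
split=> [/nbhs_ballP [e e0 pA]|[e e0 pA]]; first by exists e => // q pq; apply: pA.
apply/nbhs_ballP; exists e => // q [_ pq]; apply: pA => i j.
by have := pq i j; rewrite -ball_normE.
Qed.

Lemma ord0_neq1 : (ord0 : 'I_m.+2) != inord 1.
Proof. by rewrite -val_eqE /= inordK. Qed.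

Lemma xcoord_translate p a b : xcoord (translate p a b) = xcoord p + a.
Proof.
by rewrite /xcoord /translate !mxE eqxx /= (negbTE ord0_neq1) /= mulr1 mulr0 addr0.
Qed.

Lemma ycoord_translate p a b : ycoord (translate p a b) = ycoord p + b.
Proof.
by rewrite /ycoord /translate !mxE eqxx /= eq_sym (negbTE ord0_neq1) /= eqxx mulr1 mulr0 addr0.
Qed.

Lemma translate_near p a b i j : `|p i j - translate p a b i j| <= `|a| + `|b|.
Proof.
have uvw (u v w : R) : u - (u + v + w) = - (v + w) by lra.
rewrite /translate !mxE uvw normrN.
case: (_ && _); case: (_ && _); rewrite /= ?mulr1 ?mulr0 ?addr0 ?add0r.
- exact: ler_normD.
- by rewrite lerDl.
- by rewrite lerDr.
- by rewrite normr0 addr_ge0.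
Qed.

Lemma cylinder_ext P Q : (forall x y, P x y <-> Q x y) -> cylinder P = cylinder Q.
Proof. by move=> PQ; apply/seteqP; split => p /=; apply PQ. Qed.

Lemma closure_cylinder P : closure (cylinder P) = cylinder (closure2 P).
Proof.
apply/seteqP; split => p clp.
- move=> e e0.
  have /clp [q [Pq /andP [xq yq]]] : nbhs p [set q | (`|xcoord p - xcoord q| < e) &&
      (`|ycoord p - ycoord q| < e)].
    by apply/nbhs_coordwiseP; exists e => // q pq; apply/andP; split; exact: pq.
  by exists (xcoord q), (ycoord q).
- move=> B /nbhs_coordwiseP [e e0 pB].
  have [x' [y' [xx' yy' Pxy']]] := clp (e / 2) ltac:(lra).
  exists (translate p (x' - xcoord p) (y' - ycoord p)).
  rewrite /cylinder /= xcoord_translate ycoord_translate !subrKC; split => //.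
  apply: pB => i j; apply: le_lt_trans (translate_near _ _ _ _ _) _.
  by rewrite distrC [`|y' - _|]distrC; lra.
Qed.

Lemma interior_cylinder P : interior (cylinder P) = cylinder (interior2 P).
Proof.
apply/seteqP; split => p.
- move=> /nbhs_coordwiseP [e e0 pP]; exists (e / 2); first lra.
  move=> x' y' xx' yy'.
  have := pP (translate p (x' - xcoord p) (y' - ycoord p)).
  rewrite /cylinder /= xcoord_translate ycoord_translate !subrKC; apply => i j.
  apply: le_lt_trans (translate_near _ _ _ _ _) _.
  by rewrite distrC [`|y' - _|]distrC; lra.
- move=> [e e0 pP]; apply/nbhs_coordwiseP; exists e => // q pq.
  exact: pP (pq _ _) (pq _ _).
Qed.

Lemma cylinder_regular_closed P :
  (forall x y, closure2 (interior2 P) x y <-> P x y) -> regular_closed (cylinder P).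
Proof.
by move=> PP; rewrite /regular_closed interior_cylinder closure_cylinder; exact: cylinder_ext.
Qed.

Lemma cylinder_neq0 P x y : P x y -> cylinder P <> set0.
Proof.
move=> Pxy; apply/eqP/set0P; exists (translate 0 x y).
by rewrite /cylinder /= xcoord_translate ycoord_translate /xcoord /ycoord !mxE !add0r.
Qed.

End cylinders.

Section segments.
Context {R : realType} {m : nat}.
Local Open Scope ring_scope.
Local Notation V := 'rV[R]_m.+2.
Implicit Types (p q : V) (U : set V).

Definition seg p q : set V := (fun s : R => p + s *: (q - p)) @` `[0, 1].

Lemma seg_joined U p q : seg p q `<=` U -> joined U p q.
Proof.
move=> pqU; exists (seg p q); split => //.
- apply: connected_continuous_connected; first exact: segment_connected.
  apply: continuous_subspaceT => s; apply: cvgD; first exact: cvg_cst.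
  by apply: cvgZ; [exact: cvg_id | exact: cvg_cst].
- by exists 0; [rewrite /= in_itv /= lexx ler01 | rewrite scale0r addr0].
- by exists 1; [rewrite /= in_itv /= lexx ler01 | rewrite scale1r addrC subrK].
Qed.

Lemma seg_coord p q z : seg p q z -> exists s : R, [/\ 0 <= s <= 1,
  xcoord z = xcoord p + s * (xcoord q - xcoord p) &
  ycoord z = ycoord p + s * (ycoord q - ycoord p)].
Proof.
by move=> [s s01 <-]; exists s; rewrite /xcoord /ycoord !mxE.
Qed.

End segments.

Section model.
Context {R : realType} {m : nat}.
Local Open Scope ring_scope.
Local Notation V := 'rV[R]_m.+2.

Lemma lower_strip_strip_above_diag_connected (c : int) :
  connected (cylinder (lower_strip c) `|` cylinder (fun x _ => in_strip (c + 1) x)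
    `|` cylinder above_diag : set V).
Proof.
set U := (X in connected X).
pose q0 : V := translate 0 0 2.
have q0D : above_diag (xcoord q0) (ycoord q0).
  by rewrite xcoord_translate ycoord_translate /xcoord /ycoord !mxE !add0r /above_diag; lra.
have joinD p : above_diag (xcoord p) (ycoord p) -> joined U q0 p.
  move=> pD; apply: seg_joined => z /seg_coord [s [/andP [s0 s1] xz yz]].
  right; rewrite /cylinder /= xz yz; move: q0D pD; rewrite /above_diag => q0D pD.
  have : 0 <= s * (ycoord p - xcoord p - 2) by apply: mulr_ge0; lra.
  have : 0 <= (1 - s) * (ycoord q0 - xcoord q0 - 2) by apply: mulr_ge0; lra.
  lra.
have joinS p : in_strip (c + 1) (xcoord p) -> joined U q0 p.
  move=> pS; pose ps := translate p 0 (`|xcoord p - ycoord p| + 2).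
  apply: (joined_trans _ _ ps).
    apply: joinD; rewrite /ps xcoord_translate ycoord_translate /above_diag addr0.
    by have := ler_norm (xcoord p - ycoord p); lra.
  apply: seg_joined => z /seg_coord [s [_ xz _]]; left; right.
  by rewrite /cylinder /= xz /ps xcoord_translate addr0 subrr mulr0 addr0.
have joinL p : lower_strip c (xcoord p) (ycoord p) -> joined U q0 p.
  move=> [k [/andP [h1 h2] h3]].
  pose ph := translate p (strip_start c k + 1 - xcoord p) 0.
  have phX : xcoord ph = strip_start c k + 1 by rewrite xcoord_translate; lra.
  have phY : ycoord ph = ycoord p by rewrite ycoord_translate addr0.
  apply: (joined_trans _ _ ph).
    apply: joinS; exists k; rewrite phX /strip_start addrA intrD lexx /=; lra.
  apply: seg_joined => z /seg_coord [s [/andP [s0 s1] xz yz]].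
  left; left; exists k; rewrite /= xz yz phX phY subrr mulr0 addr0; split => //.
  have : 0 <= s * (strip_start c k + 1 - xcoord p) by apply: mulr_ge0; lra.
  have : s * (strip_start c k + 1 - xcoord p) <= strip_start c k + 1 - xcoord p.
    by rewrite ler_piMl //; lra.
  by move=> ? ?; apply/andP; split; lra.
by apply: (connected_joined _ q0) => p [[/joinL|/joinS]|/joinD].
Qed.

Definition model_r (i : 'I_4) : set V := cylinder (fun x _ => in_strip (i : nat)%:Z x).
Definition model_r' (i : 'I_4) : set V := cylinder (lower_strip (i : nat)%:Z).
Definition model_t : set V := cylinder above_diag.

Lemma succ4_strip (i : 'I_4) (P : int -> Prop) : (forall c, P (c + 4) <-> P c) ->
  P (succ4 i : nat)%:Z <-> P ((i : nat)%:Z + 1).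
Proof.
move=> P4; rewrite val_succ4; have := ltn_ord i.
have [i3 _|i3 i4] := ltnP i 3; first by rewrite modn_small // -addn1 PoszD.
have -> : (i : nat) = 3 by lia.
by rewrite -(P4 ((3.+1 %% 4)%:Z)); exact: iff_refl.
Qed.

Lemma model_r_succ i :
  model_r (succ4 i) = cylinder (fun x _ => in_strip ((i : nat)%:Z + 1) x).
Proof.
apply: cylinder_ext => x _; apply: (succ4_strip i (fun c => in_strip c x)) => c.
exact: in_stripD4.
Qed.

Lemma model_r'_succ i : model_r' (succ4 i) = cylinder (lower_strip ((i : nat)%:Z + 1)).
Proof.
apply: cylinder_ext => x y; apply: (succ4_strip i (fun c => lower_strip c x y)) => c.
exact: lower_stripD4.
Qed.

Lemma model_r_inord k : (k < 4)%N -> model_r (inord k) = cylinder (fun x _ => in_strip k%:Z x).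
Proof. by move=> k4; rewrite /model_r inordK. Qed.

Lemma model_r_cover :
  rc_add (rc_add (rc_add (model_r (inord 0)) (model_r (inord 1))) (model_r (inord 2)))
    (model_r (inord 3)) = @rc_one V.
Proof.
rewrite !model_r_inord //; apply/seteqP; split => // p _.
by case: (in_strip_cover (xcoord p)); [left; left; left | left; left; right | left; right | right].
Qed.

Lemma model_r_mul0 (i j : 'I_4) : (i < j)%N -> rc_mul (model_r i) (model_r j) = @rc_zero V.
Proof.
move=> ij; rewrite /rc_mul (_ : model_r i `&` model_r j =
  cylinder (fun x _ => in_strip (i : nat)%:Z x /\ in_strip (j : nat)%:Z x)) //.
rewrite interior_cylinder closure_cylinder; apply/seteqP; split => // p clp.
have [x' [y' [_ _ ij']]] := clp 1 ltr01.
apply: (interior2_in_stripI _ _ x' y' _ _ _ ij').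
- by apply/andP; split; [|have := ltn_ord i]; lia.
- by apply/andP; split; [|have := ltn_ord j]; lia.
- by rewrite eqz_nat neq_ltn ij.
Qed.

Lemma model_r_neq0 i : model_r i <> @rc_zero V.
Proof.
by apply: (cylinder_neq0 _ (strip_start (i : nat)%:Z 0) 0); exists 0; apply/andP; split; lra.
Qed.

Lemma model_r'_neq0 i : model_r' i <> @rc_zero V.
Proof.
apply: (cylinder_neq0 _ (strip_start (i : nat)%:Z 0) (strip_start (i : nat)%:Z 0)).
by exists 0; split => //; apply/andP; split; lra.
Qed.

Lemma model_t_neq0 : model_t <> @rc_zero V.
Proof. by apply: (cylinder_neq0 _ 0 2); rewrite /above_diag; lra. Qed.

Lemma model_r_opposite (c : nat) : (c < 2)%N ->
  ~ contact (model_r (inord c)) (model_r (inord c.+2)).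
Proof.
move=> c2; rewrite !model_r_inord; [|lia|lia] => -[p [rc rc2]].
by apply: (in_strip_opposite c%:Z (xcoord p) rc); move: rc2; rewrite -addn2 PoszD.
Qed.

Lemma model_r'_le i : rc_le (model_r' i) (model_r i).
Proof.
rewrite /rc_le /rc_mul (_ : model_r' i `&` model_r i = model_r' i).
  by apply: cylinder_regular_closed => x y; exact: lower_strip_regular.
by apply/seteqP; split => [p []//|p r'p]; split => //; exact: lower_strip_in_strip r'p.
Qed.

Lemma model_r't i : ~ contact (model_r' i) model_t.
Proof.
move=> [p [[k [/andP [h1 h2] h3]]]]; rewrite /model_t /cylinder /above_diag /= => h4.
lra.
Qed.

Lemma model_r'_next i :
  ~ contact (model_r' i) (rc_mul (model_r (succ4 i)) (rc_compl (model_r' (succ4 i)))).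
Proof.
rewrite model_r_succ model_r'_succ /rc_mul /rc_compl; set c := ((i : nat)%:Z + 1)%R.
rewrite (_ : ~` cylinder (lower_strip c) = cylinder (fun x y => ~ lower_strip c x y)) //.
rewrite closure_cylinder (_ : cylinder _ `&` cylinder _ = cylinder (fun x y =>
  in_strip c x /\ closure2 (fun x y => ~ lower_strip c x y) x y)) //.
rewrite interior_cylinder closure_cylinder => -[p [r'p /(closure2S (interior2_not_lower_upper c))]].
by move=> /closure2_upper_strip; exact: lower_upper_stripI r'p.
Qed.

Lemma model_phi_inf : phi_inf model_r model_r' model_t.
Proof.
have r_rc i : regular_closed (model_r i).
  by apply: cylinder_regular_closed => x y; exact: in_strip_regular.
have r'_rc i : regular_closed (model_r' i).
  by apply: cylinder_regular_closed => x y; exact: lower_strip_regular.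
split; first exact: r_rc.
split; first exact: r'_rc.
split; first by apply: cylinder_regular_closed => x y; exact: above_diag_regular.
split; first exact: model_r_cover.
split; first exact: model_r_mul0.
split; first exact: model_r_neq0.
split; first exact: (model_r_opposite 0).
split; first exact: (model_r_opposite 1).
split; first by move=> i; split; [exact: model_r'_neq0 | exact: model_r'_le].
split; first exact: model_t_neq0.
split; first by move=> i; rewrite model_r_succ; exact: lower_strip_strip_above_diag_connected.
split; first exact: model_r't.
exact: model_r'_next.
Qed.

End model.

Theorem theorem3p1 :
  (forall (R : realType) (n : nat), (2 <= n)%N ->
     exists (r r' : 'I_4 -> set 'rV[R]_n) (t : set 'rV[R]_n), phi_inf r r' t)
  /\
  (forall (T : topologicalType), locally_connected T -> unicoherent T ->
     forall (r r' : 'I_4 -> set T) (t : set T), phi_inf r r' t ->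
       (exists i, infinitely_many_components (r i)) \/
       (exists i, infinitely_many_components (r' i)) \/
       infinitely_many_components t).
Proof.
split; last by move=> T _; exact: phi_inf_infinitely_many_components.
move=> R [|[|m]] // _.
by exists model_r, model_r', model_t; exact: model_phi_inf.
Qed.
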